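(* Let $b\in\mathbb{R}$ and let $\gamma_0>0$, $\gamma_1>0$, $\gamma_2<0$, $\gamma_3<0$ be fixed (independent of $B$). For a parameter $B>0$, let $u=u(\cdot\,;B)$ be the solution of \[ u''''(x)=B\,u(x),\qquad x\in\mathbb{R}, \] with $u(b)=\gamma_0$, $u'(b)=\gamma_1$, $u''(b)=\gamma_2$, $u'''(b)=\gamma_3$. For $j=0,1,2,3$ let $z_j=z_j(B)$ denote the smallest zero of $u^{(j)}$ in the interval $(b,\infty)$, with the convention $z_j=\infty$ if $u^{(j)}$ does not vanish in $(b,\infty)$. Then there exists $B>0$ such that $z_1=z_3$. *)

From Stdlib Require Import Reals.
From Coquelicot Require Import Coquelicot.
Open Scope R_scope.

Definition solves_ivp (B b g0 g1 g2 g3 : R) (u : R -> R) : Prop :=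
  (forall (k : nat) (x : R), (k <= 4)%nat -> ex_derive_n u k x) /\
  (forall x : R, Derive_n u 4 x = B * u x) /\
  Derive_n u 0 b = g0 /\ Derive_n u 1 b = g1 /\
  Derive_n u 2 b = g2 /\ Derive_n u 3 b = g3.

Definition first_zero (f : R -> R) (b : R) (z : Rbar) : Prop :=
  match z with
  | Finite r => b < r /\ f r = 0 /\ (forall y, b < y < r -> f y <> 0)
  | p_infty => forall y, b < y -> f y <> 0
  | m_infty => False
  end.

(* Scaling reduces the problem to one parameter m > 0: if w solves w'''' = w with
   w^(j)(0) = g_j m^j, then u(x) = w((x - b) / m) solves it with B = m^-4, and the first
   zero of u^(j) after b is b + m times the first positive zero of w^(j).
   Say that w' vanishes first if w' becomes negative while w''' is still negative, and
   that w''' vanishes first if w''' becomes positive while w' is still positive.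
   Expressed by strict inequalities on a compact interval, both are open conditions on m;
   they exclude each other; w''' vanishes first for small m and w' for large m (integrate
   the cycle w0' = w1, w1' = w2, w2' = w3, w3' = w0 from the signs of the data). By
   connectedness some m satisfies neither, and then concavity of w' while w''' < 0, and
   convexity of w''' while w' > 0, force w' and w''' to have the same first positive
   zero, or none. Uniqueness of the solution on [b, +oo) is an energy estimate. *)

From Stdlib Require Import Reals Lra Lia Classical.
From Coquelicot Require Import Coquelicot.
Open Scope R_scope.

Lemma is_derive_lower_bound (f df : R -> R) (a b c : R) : a <= b ->
  (forall x, a <= x <= b -> is_derive f x (df x)) ->
  (forall x, a <= x <= b -> c <= df x) -> f a + c * (b - a) <= f b.
Proof.
  intros Hab Hf Hc. destruct (Req_dec a b) as [<-|Hne]; [lra|].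
  destruct (MVT_cor2 f df a b) as [x [Hfx Hx]]; [lra| intros; apply is_derive_Reals, Hf; lra|].
  specialize (Hc x ltac:(lra)). nra.
Qed.

Lemma is_derive_upper_bound (f df : R -> R) (a b c : R) : a <= b ->
  (forall x, a <= x <= b -> is_derive f x (df x)) ->
  (forall x, a <= x <= b -> df x <= c) -> f b <= f a + c * (b - a).
Proof.
  intros Hab Hf Hc.
  enough (- f a + - c * (b - a) <= - f b) by lra.
  apply (is_derive_lower_bound (fun x => - f x) (fun x => - df x)); [lra| |].
  - intros x Hx. apply (is_derive_opp f), Hf, Hx.
  - intros x Hx. specialize (Hc x Hx). lra.
Qed.

Lemma same_sign_of_no_zero (f : R -> R) (a x : R) : continuity f -> a <= x ->
  (forall y, a <= y <= x -> f y <> 0) -> 0 < f a * f x.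
Proof.
  intros Hf Hax Hnz. destruct (Rlt_le_dec 0 (f a * f x)) as [|Hle]; auto.
  destruct (IVT_cor f a x Hf Hax Hle) as [z [Hz Hfz]]. exfalso. exact (Hnz z Hz Hfz).
Qed.

Lemma continuity_pt_locally_neg (f : R -> R) (x : R) : continuity_pt f x -> f x < 0 ->
  locally x (fun y => f y < 0).
Proof.
  intros Hf Hx. apply continuity_pt_filterlim in Hf.
  assert (Hball := proj1 (@filterlim_locally R_UniformSpace R_UniformSpace (locally x) _ f (f x))
    Hf (mkposreal (- f x) ltac:(lra))).
  revert Hball. apply filter_imp. intros y Hy. apply Rabs_lt_between' in Hy. simpl in Hy. lra.
Qed.

Lemma continuity_pt_locally_nonzero (f : R -> R) (x : R) : continuity_pt f x -> f x <> 0 ->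
  locally x (fun y => f y <> 0).
Proof.
  intros Hf Hx. destruct (Rdichotomy _ _ Hx) as [Hneg|Hpos].
  - generalize (continuity_pt_locally_neg f x Hf Hneg). apply filter_imp. intros y Hy. lra.
  - assert (Hopp : continuity_pt (fun y => - f y) x) by now apply continuity_pt_opp.
    generalize (continuity_pt_locally_neg _ x Hopp ltac:(lra)). apply filter_imp. intros y Hy. lra.
Qed.

Lemma is_lub_approx (E : R -> Prop) (s d : R) : is_lub E s -> 0 < d ->
  exists x, E x /\ s - d < x.
Proof.
  intros [_ Hlub] Hd. apply NNPP. intros Hnone.
  enough (s <= s - d) by lra.
  apply Hlub. intros x Hx. apply Rnot_lt_le. intros Hlt. apply Hnone. now exists x.
Qed.

Lemma first_zero_exists (f : R -> R) (a : R) : continuity f -> f a <> 0 ->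
  exists z, first_zero f a z.
Proof.
  intros Hf Ha.
  destruct (classic (exists y, a < y /\ f y = 0)) as [[y [Hay Hy]]|Hnone].
  2: { exists p_infty. intros y Hay Hy. apply Hnone. now exists y. }
  set (E := fun x => a <= x /\ forall t, a <= t <= x -> f t <> 0).
  assert (HEa : E a) by (split; [lra| intros t Ht; now replace t with a by lra]).
  assert (HEy : forall x, E x -> x < y).
  { intros x [_ Hx]. apply Rnot_le_lt. intros Hyx. apply (Hx y); [lra|auto]. }
  destruct (completeness E) as [r Hr].
  { exists y. intros x Hx. left. now apply HEy. }
  { now exists a. }
  assert (Har : a <= r) by now apply Hr.
  assert (Hbelow : forall t, a <= t < r -> f t <> 0).
  { intros t Ht. destruct (is_lub_approx E r (r - t) Hr ltac:(lra)) as [x [[_ Hx] Htx]].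
    apply Hx. lra. }
  assert (Hfr : f r = 0).
  { apply NNPP. intros Hfr.
    destruct (continuity_pt_locally_nonzero f r (Hf r) Hfr) as [d Hd].
    enough (HE : E (r + d / 2)) by (pose proof (proj1 Hr _ HE); pose proof (cond_pos d); lra).
    split; [pose proof (cond_pos d); lra|].
    intros t Ht. destruct (Rlt_le_dec t r); [apply Hbelow; lra|].
    apply Hd. change (Rabs (t - r) < d). pose proof (cond_pos d).
    rewrite Rabs_pos_eq; lra. }
  assert (Har' : a < r) by (destruct Har as [|<-]; [auto| contradiction]).
  exists (Finite r). repeat split; auto.
  intros t Ht. apply Hbelow. lra.
Qed.

Lemma first_zero_opp (f : R -> R) (a : R) (z : Rbar) :
  first_zero f a z -> first_zero (fun s => - f s) a z.
Proof.
  destruct z as [r| |]; simpl; [|auto|auto].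
  - intros [Har [Hfr Hbefore]]. repeat split; [auto| lra|].
    intros y Hy Hfy. apply (Hbefore y Hy). lra.
  - intros Hnz y Hy Hfy. apply (Hnz y Hy). lra.
Qed.

Lemma continuous_induction_pos (f : R -> R) (a b : R) : continuity f -> 0 < f a ->
  (forall r, a < r <= b -> (forall y, a <= y <= r -> 0 <= f y) -> 0 < f r) ->
  forall y, a <= y <= b -> 0 < f y.
Proof.
  intros Hf Ha Hstep y Hy. apply Rnot_le_lt. intros Hfy.
  destruct (IVT_cor f a y Hf ltac:(lra) ltac:(nra)) as [z [Hz Hfz]].
  assert (Haz : a < z) by (destruct (proj1 Hz) as [|<-]; [auto| lra]).
  destruct (first_zero_exists f a Hf ltac:(lra)) as [[r| |] Hr]; simpl in Hr.
  - destruct Hr as [Har [Hfr Hbefore]].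
    assert (Hrz : r <= z).
    { apply Rnot_lt_le. intros Hzr. exact (Hbefore z ltac:(lra) Hfz). }
    assert (Hnonneg : forall t, a <= t <= r -> 0 <= f t).
    { intros t Ht. destruct (Req_dec t r) as [->|Htr]; [lra|].
      enough (0 < f a * f t) by nra.
      apply same_sign_of_no_zero; [auto| lra|].
      intros u Hu. destruct (Req_dec u a) as [->|]; [lra|]. apply Hbefore. lra. }
    specialize (Hstep r ltac:(lra) Hnonneg). lra.
  - exact (Hr z Haz Hfz).
  - exact Hr.
Qed.

Lemma open_disjoint_gap (P Q : R -> Prop) (a b : R) : open P -> open Q ->
  (forall x, P x -> Q x -> False) -> a <= b -> P a -> Q b ->
  exists m, a <= m <= b /\ ~ P m /\ ~ Q m.
Proof.
  intros HP HQ Hdisj Hab Pa Qb.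
  set (E := fun x => a <= x <= b /\ P x).
  destruct (completeness E) as [s Hs].
  { exists b. intros x Hx. apply Hx. }
  { exists a. split; [lra|auto]. }
  assert (Has : a <= s) by (apply Hs; split; [lra|auto]).
  assert (Hsb : s <= b) by (apply Hs; intros x Hx; apply Hx).
  exists s. repeat split; auto.
  - intros Ps. destruct (HP s Ps) as [d Hd]. pose proof (cond_pos d).
    destruct (Req_dec s b) as [->|Hsb']; [exact (Hdisj b Ps Qb)|].
    set (x := Rmin b (s + d / 2)).
    assert (Hx : s < x <= s + d / 2).
    { unfold x. split; [apply Rmin_glb_lt; lra | apply Rmin_r]. }
    enough (HEx : E x) by (pose proof (proj1 Hs x HEx); lra).
    split; [split; [lra| apply Rmin_l]|].
    apply Hd. change (Rabs (x - s) < d). rewrite Rabs_pos_eq; lra.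
  - intros Qs. destruct (HQ s Qs) as [d Hd].
    destruct (is_lub_approx E s d Hs (cond_pos d)) as [x [[Hx Px] Hsx]].
    assert (x <= s) by now apply Hs.
    apply (Hdisj x Px), Hd. change (Rabs (x - s) < d).
    rewrite Rabs_left1; lra.
Qed.

Lemma concave_neg_after_zero (f df ddf : R -> R) (a r T : R) : a < r < T ->
  (forall x, a <= x <= T -> is_derive f x (df x)) ->
  (forall x, a <= x <= T -> is_derive df x (ddf x)) ->
  (forall x, a <= x <= T -> ddf x <= 0) -> 0 < f a -> f r = 0 -> f T < 0.
Proof.
  intros Hr Hf Hdf Hddf Ha Hfr.
  assert (Hdecr : forall x y, a <= x <= y -> y <= T -> df y <= df x).
  { intros x y Hxy HyT.
    enough (df y <= df x + 0 * (y - x)) by lra.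
    apply (is_derive_upper_bound df ddf); [lra| intros; apply Hdf; lra| intros; apply Hddf; lra]. }
  assert (Hleft : f a + df r * (r - a) <= f r).
  { apply (is_derive_lower_bound f df); [lra| intros; apply Hf; lra|].
    intros x Hx. apply Hdecr; lra. }
  assert (Hright : f T <= f r + df r * (T - r)).
  { apply (is_derive_upper_bound f df); [lra| intros; apply Hf; lra|].
    intros x Hx. apply Hdecr; lra. }
  assert (df r < 0) by nra. nra.
Qed.

Definition turns_neg_first (f g : R -> R) : Prop :=
  exists T, 0 < T /\ f T < 0 /\ forall s, 0 <= s <= T -> g s < 0.

Lemma turns_neg_first_exclusive (f g : R -> R) :
  turns_neg_first f g -> turns_neg_first (fun s => - g s) (fun s => - f s) -> False.
Proof.
  intros [T [HT [HfT Hg]]] [T' [HT' [HgT' Hf]]].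
  destruct (Rle_lt_dec T T').
  - specialize (Hf T ltac:(lra)). lra.
  - specialize (Hg T' ltac:(lra)). lra.
Qed.

Lemma turns_neg_first_of_zero (f df g : R -> R) (r : R) :
  (forall x, is_derive f x (df x)) -> (forall x, is_derive df x (g x)) -> continuity g ->
  0 < f 0 -> 0 < r -> f r = 0 -> (forall s, 0 <= s <= r -> g s < 0) ->
  turns_neg_first f g.
Proof.
  intros Hf Hdf Hg Hf0 Hr Hfr Hneg.
  destruct (continuity_pt_locally_neg g r (Hg r) (Hneg r ltac:(lra))) as [d Hd].
  pose proof (cond_pos d).
  assert (HgT : forall s, 0 <= s <= r + d / 2 -> g s < 0).
  { intros s Hs. destruct (Rle_lt_dec s r); [apply Hneg; lra|].
    apply Hd. change (Rabs (s - r) < d). rewrite Rabs_pos_eq; lra. }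
  exists (r + d / 2). repeat split; [lra| |auto].
  apply (concave_neg_after_zero f df g 0 r); auto; [lra|].
  intros s Hs. left. now apply HgT.
Qed.

Lemma first_zero_le_of_not_turns_neg_first (f df g : R -> R) (zf zg : Rbar) :
  (forall x, is_derive f x (df x)) -> (forall x, is_derive df x (g x)) -> continuity g ->
  0 < f 0 -> g 0 < 0 -> first_zero f 0 zf -> first_zero g 0 zg ->
  ~ turns_neg_first f g -> Rbar_le zg zf.
Proof.
  intros Hf Hdf Hg Hf0 Hg0 Hzf Hzg Hnot.
  destruct zf as [r| |]; [| now destruct zg | contradiction].
  destruct Hzf as [Hr [Hfr _]].
  destruct (Rbar_le_lt_dec zg r) as [|Hlt]; [auto| exfalso].
  apply Hnot, (turns_neg_first_of_zero f df g r); auto.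
  intros s Hs.
  enough (0 < g 0 * g s) by nra.
  apply same_sign_of_no_zero; [auto| lra|].
  intros y Hy. destruct (Req_dec y 0) as [->|Hy0]; [lra|].
  destruct zg as [r'| |]; simpl in Hzg, Hlt; [apply Hzg | apply Hzg | contradiction]; lra.
Qed.

Definition locally_uniform (f : R -> R -> R) (m0 : R) : Prop :=
  forall T eps, 0 < eps ->
  locally m0 (fun m => forall s, 0 <= s <= T -> Rabs (f m s - f m0 s) < eps).

Lemma locally_uniform_opp (f : R -> R -> R) (m0 : R) :
  locally_uniform f m0 -> locally_uniform (fun m s => - f m s) m0.
Proof.
  intros Hf T eps Heps. generalize (Hf T eps Heps). apply filter_imp.
  intros m Hm s Hs.
  replace (- f m s - - f m0 s) with (- (f m s - f m0 s)) by ring.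
  rewrite Rabs_Ropp. now apply Hm.
Qed.

Lemma turns_neg_first_open (f g : R -> R -> R) :
  (forall m, locally_uniform f m) -> (forall m, locally_uniform g m) ->
  (forall m, continuity (g m)) -> open (fun m => turns_neg_first (f m) (g m)).
Proof.
  intros Hf Hg Hcont m0 [T [HT [HfT Hneg]]].
  destruct (continuity_ab_maj (g m0) 0 T) as [M [HM HMT]]; [lra| intros; apply Hcont|].
  assert (HgM : g m0 M < 0) by now apply Hneg.
  pose proof (Rmin_l (- g m0 M) (- f m0 T)). pose proof (Rmin_r (- g m0 M) (- f m0 T)).
  set (eps := Rmin (- g m0 M) (- f m0 T)) in *.
  assert (Heps : 0 < eps) by (apply Rmin_pos; lra).
  generalize (filter_and _ _ (Hf m0 T eps Heps) (Hg m0 T eps Heps)). apply filter_imp.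
  intros m [Hfm Hgm]. exists T. repeat split; [auto| |].
  - specialize (Hfm T ltac:(lra)). apply Rabs_lt_between' in Hfm. lra.
  - intros s Hs. specialize (Hgm s Hs). specialize (HM s Hs).
    apply Rabs_lt_between' in Hgm. lra.
Qed.

Definition quart (c0 c1 c2 c3 s : R) : R :=
  c0 * (cosh s + cos s) / 2 + c1 * (sinh s + sin s) / 2
  + c2 * (cosh s - cos s) / 2 + c3 * (sinh s - sin s) / 2.

Lemma is_derive_quart (c0 c1 c2 c3 s : R) :
  is_derive (quart c0 c1 c2 c3) s (quart c1 c2 c3 c0 s).
Proof. unfold quart, cosh, sinh. auto_derive; [auto|]. unfold Rdiv, Rminus. ring. Qed.

Lemma quart_0 (c0 c1 c2 c3 : R) : quart c0 c1 c2 c3 0 = c0.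
Proof. unfold quart. rewrite cosh_0, sinh_0, cos_0, sin_0. field. Qed.

Lemma continuity_quart (c0 c1 c2 c3 : R) : continuity (quart c0 c1 c2 c3).
Proof.
  intros s. apply derivable_continuous_pt. exists (quart c1 c2 c3 c0 s).
  apply is_derive_Reals, is_derive_quart.
Qed.

Lemma quart_minus (c0 c1 c2 c3 d0 d1 d2 d3 s : R) :
  quart c0 c1 c2 c3 s - quart d0 d1 d2 d3 s = quart (c0 - d0) (c1 - d1) (c2 - d2) (c3 - d3) s.
Proof. unfold quart. field. Qed.

Lemma exp_le_compat (x y : R) : x <= y -> exp x <= exp y.
Proof. intros [Hlt| ->]; [left; now apply exp_increasing| lra]. Qed.

Lemma Rabs_quart_le (c0 c1 c2 c3 s : R) : 0 <= s ->
  Rabs (quart c0 c1 c2 c3 s) <= (Rabs c0 + Rabs c1 + Rabs c2 + Rabs c3) * exp s.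
Proof.
  intros Hs.
  assert (Hexp : 1 <= exp s /\ exp (- s) <= 1).
  { rewrite <- exp_0. split; apply exp_le_compat; lra. }
  pose proof (exp_pos (- s)). pose proof (COS_bound s). pose proof (SIN_bound s).
  assert (Hterm : forall c v, - (2 * exp s) <= v <= 2 * exp s ->
    - (Rabs c * exp s) <= c * v / 2 <= Rabs c * exp s).
  { intros c v Hv. destruct (Rle_or_lt 0 c);
      [rewrite Rabs_pos_eq by lra | rewrite Rabs_left by lra]; split; nra. }
  unfold quart, cosh, sinh.
  pose proof (Hterm c0 ((exp s + exp (- s)) / 2 + cos s) ltac:(lra)).
  pose proof (Hterm c1 ((exp s - exp (- s)) / 2 + sin s) ltac:(lra)).
  pose proof (Hterm c2 ((exp s + exp (- s)) / 2 - cos s) ltac:(lra)).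
  pose proof (Hterm c3 ((exp s - exp (- s)) / 2 - sin s) ltac:(lra)).
  apply Rabs_le. lra.
Qed.

Lemma locally_uniform_quart (c0 c1 c2 c3 : R -> R) (m0 : R) :
  continuity_pt c0 m0 -> continuity_pt c1 m0 -> continuity_pt c2 m0 -> continuity_pt c3 m0 ->
  locally_uniform (fun m => quart (c0 m) (c1 m) (c2 m) (c3 m)) m0.
Proof.
  intros H0 H1 H2 H3 T eps Heps. pose proof (exp_pos T).
  set (d := eps / (4 * exp T)).
  assert (Hd : 0 < d) by (apply Rdiv_lt_0_compat; lra).
  assert (Hclose : forall c, continuity_pt c m0 -> locally m0 (fun m => Rabs (c m - c m0) < d)).
  { intros c Hc. apply continuity_pt_filterlim in Hc.
    exact (proj1 (@filterlim_locally R_UniformSpace R_UniformSpace (locally m0) _ c (c m0))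
      Hc (mkposreal d Hd)). }
  generalize (filter_and _ _ (Hclose _ H0)
    (filter_and _ _ (Hclose _ H1) (filter_and _ _ (Hclose _ H2) (Hclose _ H3)))).
  apply filter_imp. intros m [K0 [K1 [K2 K3]]] s Hs.
  rewrite quart_minus. eapply Rle_lt_trans; [apply Rabs_quart_le; lra|].
  set (S := Rabs (c0 m - c0 m0) + Rabs (c1 m - c1 m0) + Rabs (c2 m - c2 m0)
    + Rabs (c3 m - c3 m0)).
  assert (HS : 0 <= S < 4 * d).
  { pose proof (Rabs_pos (c0 m - c0 m0)). pose proof (Rabs_pos (c1 m - c1 m0)).
    pose proof (Rabs_pos (c2 m - c2 m0)). pose proof (Rabs_pos (c3 m - c3 m0)).
    unfold S. lra. }
  apply Rle_lt_trans with (S * exp T); [apply Rmult_le_compat_l, exp_le_compat; lra|].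
  replace eps with (4 * d * exp T) by (unfold d; field; lra).
  apply Rmult_lt_compat_r; lra.
Qed.

Lemma Derive_n_quart_S (c0 c1 c2 c3 : R) (n : nat) (x : R) :
  Derive_n (quart c0 c1 c2 c3) (S n) x = Derive_n (quart c1 c2 c3 c0) n x.
Proof.
  rewrite <- Nat.add_1_r, <- Derive_n_comp. apply Derive_n_ext.
  intros t. change (Derive (quart c0 c1 c2 c3) t = quart c1 c2 c3 c0 t).
  apply is_derive_unique, is_derive_quart.
Qed.

Lemma ex_derive_n_quart (n : nat) : forall (c0 c1 c2 c3 x : R), ex_derive_n (quart c0 c1 c2 c3) n x.
Proof.
  destruct n as [|n]; [intros; exact I|].
  induction n as [|n IH]; intros c0 c1 c2 c3 x.
  - change (ex_derive (quart c0 c1 c2 c3) x).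
    exists (quart c1 c2 c3 c0 x). apply is_derive_quart.
  - change (ex_derive (Derive_n (quart c0 c1 c2 c3) (S n)) x).
    apply (ex_derive_ext (Derive_n (quart c1 c2 c3 c0) n)); [|exact (IH c1 c2 c3 c0 x)].
    intros t. symmetry. apply Derive_n_quart_S.
Qed.

Lemma Derive_n_affine (f : R -> R) (a b : R) (n : nat) (x : R) :
  (forall k y, ex_derive_n f k y) ->
  Derive_n (fun y => f (a * (y - b))) n x = a ^ n * Derive_n f n (a * (x - b)).
Proof.
  intros Hf. etransitivity; [exact (Derive_n_comp_trans (fun y => f (a * y)) n x (- b))|].
  apply Derive_n_comp_scal. apply filter_forall. intros y k _. apply Hf.
Qed.

Lemma ex_derive_n_affine (f : R -> R) (a b : R) (n : nat) (x : R) :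
  (forall k y, ex_derive_n f k y) -> ex_derive_n (fun y => f (a * (y - b))) n x.
Proof.
  intros Hf. apply (ex_derive_n_comp_trans (fun y => f (a * y))).
  apply ex_derive_n_comp_scal. apply filter_forall. intros y k _. apply Hf.
Qed.

Lemma ode4_energy_le (B a0 a1 a2 a3 : R) :
  2 * (a0 * a1 + a1 * a2 + a2 * a3 + B * a3 * a0)
  <= (2 + Rabs B) * (a0 * a0 + a1 * a1 + a2 * a2 + a3 * a3).
Proof.
  pose proof (Rle_0_sqr (a0 - a1)). pose proof (Rle_0_sqr (a1 - a2)).
  pose proof (Rle_0_sqr (a2 - a3)). pose proof (Rle_0_sqr (a3 - a0)).
  pose proof (Rle_0_sqr (a3 + a0)). pose proof (Rle_0_sqr a0). pose proof (Rle_0_sqr a1).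
  pose proof (Rle_0_sqr a2). pose proof (Rle_0_sqr a3).
  unfold Rsqr in *. destruct (Rcase_abs B) as [HB|HB];
    [rewrite Rabs_left by lra | rewrite Rabs_right by lra]; nra.
Qed.

Lemma linear_ode4_zero_forward (B b : R) (y0 y1 y2 y3 : R -> R) :
  (forall x, is_derive y0 x (y1 x)) -> (forall x, is_derive y1 x (y2 x)) ->
  (forall x, is_derive y2 x (y3 x)) -> (forall x, is_derive y3 x (B * y0 x)) ->
  y0 b = 0 -> y1 b = 0 -> y2 b = 0 -> y3 b = 0 ->
  forall x, b <= x -> y0 x = 0 /\ y1 x = 0 /\ y2 x = 0 /\ y3 x = 0.
Proof.
  intros D0 D1 D2 D3 Z0 Z1 Z2 Z3 x Hx.
  set (K := 2 + Rabs B).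
  set (E := fun t => y0 t * y0 t + y1 t * y1 t + y2 t * y2 t + y3 t * y3 t).
  set (dE := fun t => 2 * (y0 t * y1 t + y1 t * y2 t + y2 t * y3 t + B * y3 t * y0 t)).
  assert (HE : forall t, is_derive E t (dE t)).
  { intros t. unfold E, dE. auto_derive; [repeat split; eexists; eauto|].
    rewrite (is_derive_unique (fun s : R => y0 s) t _ (D0 t)),
      (is_derive_unique (fun s : R => y1 s) t _ (D1 t)),
      (is_derive_unique (fun s : R => y2 s) t _ (D2 t)),
      (is_derive_unique (fun s : R => y3 s) t _ (D3 t)).
    ring. }
  set (Phi := fun t => E t * exp (- K * (t - b))).
  set (dPhi := fun t => (dE t - K * E t) * exp (- K * (t - b))).
  assert (HPhi : forall t, is_derive Phi t (dPhi t)).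
  { intros t. unfold Phi, dPhi. auto_derive; [now exists (dE t)|].
    rewrite (is_derive_unique (fun s : R => E s) t _ (HE t)). unfold Rminus. ring. }
  assert (HdPhi : forall t, dPhi t <= 0).
  { intros t. unfold dPhi. pose proof (exp_pos (- K * (t - b))).
    enough (dE t <= K * E t) by nra. apply ode4_energy_le. }
  assert (HPhix : Phi x <= Phi b + 0 * (x - b)) by (apply (is_derive_upper_bound Phi dPhi); auto).
  assert (HEb : E b = 0) by (unfold E; rewrite Z0, Z1, Z2, Z3; ring).
  unfold Phi in HPhix. rewrite HEb in HPhix. pose proof (exp_pos (- K * (x - b))).
  assert (HEx : E x <= 0) by nra.
  unfold E in HEx. repeat split; nra.
Qed.

Lemma is_derive_Derive_n (f : R -> R) (n : nat) (x : R) :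
  ex_derive_n f (S n) x -> is_derive (Derive_n f n) x (Derive_n f (S n) x).
Proof. apply Derive_correct. Qed.

Lemma solves_ivp_unique_forward (B b g0 g1 g2 g3 : R) (v w : R -> R) :
  solves_ivp B b g0 g1 g2 g3 v -> solves_ivp B b g0 g1 g2 g3 w ->
  forall x, b <= x -> forall j, (j <= 3)%nat -> Derive_n v j x = Derive_n w j x.
Proof.
  intros [Hv [Hv4 [Hv0 [Hv1 [Hv2 Hv3]]]]] [Hw [Hw4 [Hw0 [Hw1 [Hw2 Hw3]]]]].
  set (y := fun j x => Derive_n v j x - Derive_n w j x).
  assert (Hy : forall j x, (j <= 3)%nat -> is_derive (y j) x (y (S j) x)).
  { intros j x Hj. apply (is_derive_minus (Derive_n v j) (Derive_n w j));
      apply is_derive_Derive_n; [apply Hv | apply Hw]; lia. }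
  assert (Hy3 : forall x, is_derive (y 3%nat) x (B * y 0%nat x)).
  { intros x. replace (B * y 0%nat x) with (y 4%nat x) by (unfold y; rewrite Hv4, Hw4; simpl; ring).
    apply Hy. lia. }
  intros x Hx j Hj.
  assert (Hzero : y 0%nat x = 0 /\ y 1%nat x = 0 /\ y 2%nat x = 0 /\ y 3%nat x = 0).
  { apply (linear_ode4_zero_forward B b); [| | | exact Hy3 | | | | | exact Hx];
      try (intros; apply Hy; lia); unfold y; lra. }
  unfold y in Hzero. destruct j as [|[|[|[|j]]]]; [lra.. | lia].
Qed.

Lemma exists_small_scale (a b c d : R) : 0 <= a -> 0 < b -> 0 <= c -> 0 < d ->
  exists m, 0 < m <= 1 /\ m * a < b /\ m * c < d.
Proof.
  intros Ha Hb Hc Hd.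
  assert (Hx : 0 <= a / b) by (apply Rdiv_le_0_compat; lra).
  assert (Hy : 0 <= c / d) by (apply Rdiv_le_0_compat; lra).
  set (x := a / b) in *. set (y := c / d) in *.
  set (m := / (1 + x + y)). exists m.
  assert (Hm : 0 < m) by (apply Rinv_0_lt_compat; lra).
  assert (Hm1 : m * (1 + x + y) = 1) by (unfold m; field; lra).
  assert (0 <= m * x /\ 0 <= m * y) as [Hmx Hmy] by (split; apply Rmult_le_pos; lra).
  replace a with (x * b) by (unfold x; field; lra).
  replace c with (y * d) by (unfold y; field; lra).
  repeat split; nra.
Qed.

Section Profile.

Variables g0 g1 g2 g3 : R.
Hypotheses (hg0 : 0 < g0) (hg1 : 0 < g1) (hg2 : g2 < 0) (hg3 : g3 < 0).

Definition w0 (m : R) : R -> R := quart g0 (g1 * m) (g2 * m ^ 2) (g3 * m ^ 3).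
Definition w1 (m : R) : R -> R := quart (g1 * m) (g2 * m ^ 2) (g3 * m ^ 3) g0.
Definition w2 (m : R) : R -> R := quart (g2 * m ^ 2) (g3 * m ^ 3) g0 (g1 * m).
Definition w3 (m : R) : R -> R := quart (g3 * m ^ 3) g0 (g1 * m) (g2 * m ^ 2).

Lemma w0_0 (m : R) : w0 m 0 = g0. Proof. apply quart_0. Qed.
Lemma w1_0 (m : R) : w1 m 0 = g1 * m. Proof. apply quart_0. Qed.
Lemma w2_0 (m : R) : w2 m 0 = g2 * m ^ 2. Proof. apply quart_0. Qed.
Lemma w3_0 (m : R) : w3 m 0 = g3 * m ^ 3. Proof. apply quart_0. Qed.

Lemma is_derive_w0 (m s : R) : is_derive (w0 m) s (w1 m s). Proof. apply is_derive_quart. Qed.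
Lemma is_derive_w1 (m s : R) : is_derive (w1 m) s (w2 m s). Proof. apply is_derive_quart. Qed.
Lemma is_derive_w2 (m s : R) : is_derive (w2 m) s (w3 m s). Proof. apply is_derive_quart. Qed.
Lemma is_derive_w3 (m s : R) : is_derive (w3 m) s (w0 m s). Proof. apply is_derive_quart. Qed.

Definition w1_vanishes_first (m : R) : Prop := turns_neg_first (w1 m) (w3 m).
Definition w3_vanishes_first (m : R) : Prop :=
  turns_neg_first (fun s => - w3 m s) (fun s => - w1 m s).

Lemma locally_uniform_w1 (m0 : R) : locally_uniform w1 m0.
Proof.
  apply (locally_uniform_quart (fun m => g1 * m) (fun m => g2 * m ^ 2) (fun m => g3 * m ^ 3)
    (fun _ => g0)); reg.
Qed.

Lemma locally_uniform_w3 (m0 : R) : locally_uniform w3 m0.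
Proof.
  apply (locally_uniform_quart (fun m => g3 * m ^ 3) (fun _ => g0) (fun m => g1 * m)
    (fun m => g2 * m ^ 2)); reg.
Qed.

Lemma open_w1_vanishes_first : open w1_vanishes_first.
Proof.
  apply (turns_neg_first_open w1 w3 locally_uniform_w1 locally_uniform_w3).
  intros m. apply continuity_quart.
Qed.

Lemma open_w3_vanishes_first : open w3_vanishes_first.
Proof.
  apply (turns_neg_first_open (fun m s => - w3 m s) (fun m s => - w1 m s)).
  - intros m0. apply locally_uniform_opp, locally_uniform_w3.
  - intros m0. apply locally_uniform_opp, locally_uniform_w1.
  - intros m. apply (continuity_opp (w1 m)), continuity_quart.
Qed.

Lemma w0_ge (m r : R) : (forall s, 0 <= s <= r -> 0 <= w1 m s) ->
  forall s, 0 <= s <= r -> g0 <= w0 m s.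
Proof.
  intros Hw1 s Hs. replace g0 with (w0 m 0 + 0 * (s - 0)) by (rewrite w0_0; ring).
  apply (is_derive_lower_bound _ (w1 m)); [lra| intros; apply is_derive_w0|].
  intros t Ht. apply Hw1. lra.
Qed.

Lemma w2_le (m r : R) : (forall s, 0 <= s <= r -> w3 m s <= 0) ->
  forall s, 0 <= s <= r -> w2 m s <= g2 * m ^ 2.
Proof.
  intros Hw3 s Hs. replace (g2 * m ^ 2) with (w2 m 0 + 0 * (s - 0)) by (rewrite w2_0; ring).
  apply (is_derive_upper_bound _ (w3 m)); [lra| intros; apply is_derive_w2|].
  intros t Ht. apply Hw3. lra.
Qed.

Lemma w1_pos_small (m : R) : 0 < m <= 1 -> m * - (g2 + g3) < g1 ->
  forall s, 0 <= s <= m -> 0 < w1 m s.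
Proof.
  intros Hm Hmg. assert (Hm2 : 0 < m ^ 2) by (apply pow_lt; lra).
  apply continuous_induction_pos; [apply continuity_quart| rewrite w1_0; nra|].
  intros r Hr Hnonneg.
  assert (Hw3 : forall s, 0 <= s <= r -> g3 * m ^ 3 <= w3 m s).
  { intros s Hs. replace (g3 * m ^ 3) with (w3 m 0 + 0 * (s - 0)) by (rewrite w3_0; ring).
    apply (is_derive_lower_bound _ (w0 m)); [lra| intros; apply is_derive_w3|].
    intros t Ht. pose proof (w0_ge m r Hnonneg t ltac:(lra)). lra. }
  assert (Hw2 : forall s, 0 <= s <= r -> g2 * m ^ 2 + g3 * m ^ 3 * r <= w2 m s).
  { intros s Hs.
    assert (Hlb : w2 m 0 + g3 * m ^ 3 * (s - 0) <= w2 m s).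
    { apply (is_derive_lower_bound _ (w3 m)); [lra| intros; apply is_derive_w2|].
      intros t Ht. apply Hw3. lra. }
    rewrite w2_0 in Hlb.
    assert (g3 * m ^ 3 * r <= g3 * m ^ 3 * s).
    { apply Rmult_le_compat_neg_l; [|lra]. pose proof (pow_lt m 3 ltac:(lra)). nra. }
    lra. }
  assert (Hw1 : w1 m 0 + (g2 * m ^ 2 + g3 * m ^ 3 * r) * (r - 0) <= w1 m r).
  { apply (is_derive_lower_bound _ (w2 m)); [lra| intros; apply is_derive_w1|].
    intros t Ht. apply Hw2. lra. }
  rewrite w1_0 in Hw1.
  assert (g2 * m ^ 2 <= g2 * m ^ 2 * r) by (assert (g2 * m ^ 2 < 0) by nra; nra).
  assert (g3 * m ^ 2 <= g3 * m ^ 3 * (r * r)).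
  { replace (g3 * m ^ 3 * (r * r)) with (g3 * m ^ 2 * (m * (r * r))) by ring.
    assert (m * (r * r) <= 1) by nra. assert (g3 * m ^ 2 < 0) by nra. nra. }
  assert (0 < m * (g1 + (g2 + g3) * m)) by nra.
  nra.
Qed.

Lemma w3_vanishes_first_small : exists m, 0 < m <= 1 /\ w3_vanishes_first m.
Proof.
  destruct (exists_small_scale (- g3) g0 (- (g2 + g3)) g1) as [m [Hm [Hm0 Hm1]]]; [lra..|].
  pose proof (w1_pos_small m Hm Hm1) as Hw1.
  assert (Hw3 : w3 m 0 + g0 * (m - 0) <= w3 m m).
  { apply (is_derive_lower_bound _ (w0 m)); [lra| intros; apply is_derive_w3|].
    intros t Ht. apply (w0_ge m m); [intros; left; apply Hw1; lra| lra]. }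
  rewrite w3_0 in Hw3.
  assert (0 < m * (g0 + g3 * m ^ 2)).
  { assert (m ^ 2 <= m) by (simpl; nra).
    assert (g3 * m <= g3 * m ^ 2) by (apply Rmult_le_compat_neg_l; lra).
    apply Rmult_lt_0_compat; lra. }
  exists m. split; [auto|]. exists m. repeat split; [lra| nra|].
  intros s Hs. pose proof (Hw1 s Hs). lra.
Qed.

Lemma w3_neg_large (m T : R) : 1 <= m -> 0 <= T -> (g0 + g1 * m * T) * T < - g3 ->
  forall s, 0 <= s <= T -> w3 m s < 0.
Proof.
  intros Hm HT Hkey.
  assert (Hm3 : 1 <= m ^ 3) by now apply pow_R1_Rle.
  assert (Ha1 : 0 < g1 * m) by nra.
  assert (Ha2 : g2 * m ^ 2 < 0) by (pose proof (pow_lt m 2 ltac:(lra)); nra).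
  enough (forall s, 0 <= s <= T -> 0 < - w3 m s) by (intros s Hs; specialize (H s Hs); lra).
  apply (continuous_induction_pos (fun s => - w3 m s)).
  { apply (continuity_opp (w3 m)), continuity_quart. }
  { rewrite w3_0. nra. }
  intros r Hr Hnonpos.
  assert (Hw2 : forall s, 0 <= s <= r -> w2 m s <= g2 * m ^ 2).
  { apply w2_le. intros s Hs. specialize (Hnonpos s Hs). lra. }
  assert (Hw1 : forall s, 0 <= s <= r -> w1 m s <= g1 * m).
  { intros s Hs.
    assert (Hub : w1 m s <= w1 m 0 + g2 * m ^ 2 * (s - 0)).
    { apply (is_derive_upper_bound _ (w2 m)); [lra| intros; apply is_derive_w1|].
      intros t Ht. apply Hw2. lra. }
    rewrite w1_0 in Hub.
    assert (g2 * m ^ 2 * s <= 0) by nra.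
    lra. }
  assert (Hw0 : forall s, 0 <= s <= r -> w0 m s <= g0 + g1 * m * r).
  { intros s Hs.
    assert (Hub : w0 m s <= w0 m 0 + g1 * m * (s - 0)).
    { apply (is_derive_upper_bound _ (w1 m)); [lra| intros; apply is_derive_w0|].
      intros t Ht. apply Hw1. lra. }
    rewrite w0_0 in Hub. nra. }
  assert (Hub : w3 m r <= w3 m 0 + (g0 + g1 * m * r) * (r - 0)).
  { apply (is_derive_upper_bound _ (w0 m)); [lra| intros; apply is_derive_w3|].
    intros t Ht. apply Hw0. lra. }
  rewrite w3_0 in Hub.
  assert ((g0 + g1 * m * r) * r <= (g0 + g1 * m * T) * T) by (apply Rmult_le_compat; nra).
  nra.
Qed.

Lemma w1_vanishes_first_large : exists m, 1 <= m /\ w1_vanishes_first m.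
Proof.
  (* With T = c / m, the bound w1 T <= g1 m + g2 m^2 T equals - g1 m. *)
  set (c := 2 * g1 / - g2).
  assert (Hc : 0 < c) by (apply Rdiv_lt_0_compat; lra).
  assert (Hgc : g2 * c = - 2 * g1) by (unfold c; field; lra).
  set (m := 1 + (g0 + g1 * c) * c / - g3).
  assert (Hm : 1 <= m).
  { assert (0 <= (g0 + g1 * c) * c / - g3) by (apply Rdiv_le_0_compat; nra). unfold m. lra. }
  set (T := c / m).
  assert (HT : 0 < T) by (apply Rdiv_lt_0_compat; lra).
  assert (HmT : m * T = c) by (unfold T; field; lra).
  assert (Hkey : (g0 + g1 * m * T) * T < - g3).
  { apply Rmult_lt_reg_r with m; [lra|].
    replace ((g0 + g1 * m * T) * T * m) with ((g0 + g1 * c) * c) by (rewrite <- HmT; ring).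
    replace (- g3 * m) with (- g3 + (g0 + g1 * c) * c) by (unfold m; field; lra). lra. }
  pose proof (w3_neg_large m T Hm ltac:(lra) Hkey) as Hw3.
  assert (Hw1 : w1 m T <= w1 m 0 + g2 * m ^ 2 * (T - 0)).
  { apply (is_derive_upper_bound _ (w2 m)); [lra| intros; apply is_derive_w1|].
    intros t Ht. apply (w2_le m T); [intros; left; apply Hw3| ]; lra. }
  rewrite w1_0 in Hw1.
  replace (g2 * m ^ 2 * (T - 0)) with (g2 * c * m) in Hw1 by (rewrite <- HmT; ring).
  exists m. split; [auto|]. exists T. repeat split; [auto| nra| auto].
Qed.

Lemma scale_with_no_first_vanishing :
  exists m, 0 < m /\ ~ w1_vanishes_first m /\ ~ w3_vanishes_first m.
Proof.
  destruct w3_vanishes_first_small as [ms [Hms Cs]].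
  destruct w1_vanishes_first_large as [ml [Hml Al]].
  destruct (open_disjoint_gap w3_vanishes_first w1_vanishes_first ms ml) as [m [Hm [HC HA]]];
    [apply open_w3_vanishes_first| apply open_w1_vanishes_first| | lra| auto| auto|].
  { intros x HCx HAx. exact (turns_neg_first_exclusive _ _ HAx HCx). }
  exists m. repeat split; [lra| auto| auto].
Qed.

Lemma first_zeros_w1_w3_agree (m : R) : 0 < m -> ~ w1_vanishes_first m -> ~ w3_vanishes_first m ->
  exists z, first_zero (w1 m) 0 z /\ first_zero (w3 m) 0 z.
Proof.
  intros Hm HA HC.
  assert (Hw10 : 0 < w1 m 0) by (rewrite w1_0; nra).
  assert (Hw30 : w3 m 0 < 0) by (rewrite w3_0; pose proof (pow_lt m 3 Hm); nra).
  destruct (first_zero_exists (w1 m) 0) as [z1 Hz1]; [apply continuity_quart| lra|].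
  destruct (first_zero_exists (w3 m) 0) as [z3 Hz3]; [apply continuity_quart| lra|].
  exists z1. split; [auto|]. replace z1 with z3; [auto|].
  apply Rbar_le_antisym.
  - apply (first_zero_le_of_not_turns_neg_first (w1 m) (w2 m) (w3 m));
      [apply is_derive_w1| apply is_derive_w2| apply continuity_quart| lra| lra| auto| auto| auto].
  - apply (first_zero_le_of_not_turns_neg_first (fun s => - w3 m s) (fun s => - w0 m s)
      (fun s => - w1 m s));
      [| | | lra| lra| now apply first_zero_opp| now apply first_zero_opp| exact HC].
    + intros x. apply (is_derive_opp (w3 m)), is_derive_w3.
    + intros x. apply (is_derive_opp (w0 m)), is_derive_w0.
    + apply (continuity_opp (w1 m)), continuity_quart.
Qed.

End Profile.

Definition scaled_profile (g0 g1 g2 g3 m b x : R) : R := w0 g0 g1 g2 g3 m (/ m * (x - b)).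

Lemma Derive_n_scaled_profile (g0 g1 g2 g3 m b : R) (n : nat) (x : R) :
  Derive_n (scaled_profile g0 g1 g2 g3 m b) n x
  = (/ m) ^ n * Derive_n (w0 g0 g1 g2 g3 m) n (/ m * (x - b)).
Proof. apply Derive_n_affine. intros k y. apply ex_derive_n_quart. Qed.

Lemma solves_ivp_scaled_profile (g0 g1 g2 g3 m b : R) : 0 < m ->
  solves_ivp ((/ m) ^ 4) b g0 g1 g2 g3 (scaled_profile g0 g1 g2 g3 m b).
Proof.
  intros Hm. repeat split.
  - intros k x _. apply ex_derive_n_affine. intros; apply ex_derive_n_quart.
  - intros x. rewrite Derive_n_scaled_profile. unfold w0. rewrite !Derive_n_quart_S. reflexivity.
  - all: rewrite Derive_n_scaled_profile; replace (/ m * (b - b)) with 0 by ring;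
      unfold w0; rewrite ?Derive_n_quart_S; simpl; rewrite quart_0; field; lra.
Qed.

Lemma first_zero_rescale (f D : R -> R) (b m c : R) (z : Rbar) : 0 < m -> c <> 0 ->
  (forall x, b <= x -> D x = c * f (/ m * (x - b))) ->
  first_zero f 0 z -> first_zero D b (Rbar_plus b (Rbar_mult m z)).
Proof.
  intros Hm Hc HD Hz.
  assert (Hpos : forall x, b < x -> 0 < / m * (x - b)).
  { intros x Hx. apply Rmult_lt_0_compat; [apply Rinv_0_lt_compat|]; lra. }
  assert (HDnz : forall x, b < x -> f (/ m * (x - b)) <> 0 -> D x <> 0).
  { intros x Hx Hf. rewrite HD by lra. now apply Rmult_integral_contrapositive_currified. }
  destruct z as [r| |]; [simpl in Hz |- * | | contradiction].
  - destruct Hz as [Hr [Hfr Hbefore]]. repeat split; [nra| |].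
    + rewrite HD by nra. replace (/ m * (b + m * r - b)) with r by (field; lra). rewrite Hfr. ring.
    + intros y Hy. apply HDnz; [lra|]. apply Hbefore. split; [apply Hpos; lra|].
      apply Rmult_lt_reg_l with m; [lra|].
      replace (m * (/ m * (y - b))) with (y - b) by (field; lra). lra.
  - rewrite Rbar_mult_comm, (is_Rbar_mult_unique _ _ _ (is_Rbar_mult_p_infty_pos m Hm)).
    intros y Hy. apply HDnz, Hz, Hpos; lra.
Qed.

Theorem lemma1 (b g0 g1 g2 g3 : R)
  (hg0 : 0 < g0) (hg1 : 0 < g1) (hg2 : g2 < 0) (hg3 : g3 < 0) :
  exists B : R, 0 < B /\
    (exists u : R -> R, solves_ivp B b g0 g1 g2 g3 u) /\
    (forall u : R -> R, solves_ivp B b g0 g1 g2 g3 u ->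
       exists z : Rbar,
         first_zero (Derive_n u 1) b z /\ first_zero (Derive_n u 3) b z).
Proof.
  destruct (scale_with_no_first_vanishing g0 g1 g2 g3 hg0 hg1 hg2 hg3) as [m [Hm [HA HC]]].
  destruct (first_zeros_w1_w3_agree g0 g1 g2 g3 hg1 hg3 m Hm HA HC) as [z [Hz1 Hz3]].
  pose proof (solves_ivp_scaled_profile g0 g1 g2 g3 m b Hm) as Hu.
  exists ((/ m) ^ 4). split; [apply pow_lt, Rinv_0_lt_compat; lra|].
  split; [now exists (scaled_profile g0 g1 g2 g3 m b)|].
  intros v Hv. exists (Rbar_plus b (Rbar_mult m z)).
  assert (Hc : forall k, (/ m) ^ k <> 0) by (intros; apply pow_nonzero, Rinv_neq_0_compat; lra).
  split.
  - apply (first_zero_rescale (w1 g0 g1 g2 g3 m) _ b m ((/ m) ^ 1)); auto.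
    intros x Hx. rewrite (solves_ivp_unique_forward _ _ _ _ _ _ _ _ Hv Hu x Hx 1) by lia.
    rewrite Derive_n_scaled_profile. unfold w0. rewrite Derive_n_quart_S. reflexivity.
  - apply (first_zero_rescale (w3 g0 g1 g2 g3 m) _ b m ((/ m) ^ 3)); auto.
    intros x Hx. rewrite (solves_ivp_unique_forward _ _ _ _ _ _ _ _ Hv Hu x Hx 3) by lia.
    rewrite Derive_n_scaled_profile. unfold w0. rewrite !Derive_n_quart_S. reflexivity.
Qed.
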